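(* Let $\mathcal{X}=\{1,\ldots,d\}$, let $\mathcal{S}$ be the probability simplex in $\mathbb{R}^d$ (identified with probability measures on $\mathcal{X}$), $\mathcal{S}^\circ=\{p\in\mathcal{S}:p_x>0\ \forall x\}$, and $\mathcal{H}_0=\{v\in\mathbb{R}^d:\sum_x v_x=0\}$. Let $K:\mathcal{X}\times\mathbb{R}^d\to\mathbb{R}$ be such that each $K^x(\cdot)=K(x,\cdot)$ is continuously differentiable on $\mathbb{R}^d$, and let $(\alpha(x,y))_{x,y\in\mathcal{X}}$ be an irreducible symmetric matrix with zero diagonal and off-diagonal entries in $\{0,1\}$. Define $$H^x(p)=K^x(p)+\sum_{z\in\mathcal{X}}\Big(\frac{\partial}{\partial p_x}K^z(p)\Big)p_z,\qquad \Psi(x,y,p)=H^y(p)-H^x(p),$$ $$\Gamma_{xy}(p)=e^{-(\Psi(x,y,p))^+}\alpha(x,y)\ (x\ne y),\qquad \Gamma_{xx}(p)=-\sum_{y\ne x}\Gamma_{xy}(p),$$ and $F(p)=\sum_{x\in\mathcal{X}}(K^x(p)+\log p_x)p_x$ for $p\in\mathcal{S}$. Let $p\in\mathcal{S}$. Then $p$ is a fixed point of the ODE $\frac{d}{dt}p(t)=p(t)\Gamma(p(t))$ (i.e. $p\Gamma(p)=0$) if and only if $p\in\mathcal{S}^\circ$ and $\frac{\partial}{\partial v}F(p)=0$ for all $v\in\mathcal{H}_0$.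
   Context: $\alpha$ irreducible means the graph on $\mathcal{X}$ with edges $\{x,y\}$ where $\alpha(x,y)=1$ is connected. For $p\in\mathcal{S}^\circ$ and $v\in\mathcal{H}_0$, $\frac{\partial}{\partial v}F(p)=\frac{d}{ds}F(p+sv)\big|_{s=0}$ denotes the directional derivative of $F$ (the formula defining $F$ makes sense for all vectors with positive entries). *)

From HB Require Import structures.
From mathcomp Require Import all_boot all_order all_algebra.
From mathcomp Require Import all_classical all_reals all_analysis.
Set Implicit Arguments. Unset Strict Implicit. Unset Printing Implicit Defensive.
Import Order.TTheory GRing.Theory Num.Theory.
Import numFieldNormedType.Exports.
Local Open Scope ring_scope.

Section Defs.
Variables (R : realType) (d : nat).

Definition simplex (p : 'rV[R]_d) : Prop :=
  (forall x, 0 <= p ord0 x) /\ \sum_x p ord0 x = 1.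

Definition simplex_int (p : 'rV[R]_d) : Prop :=
  simplex p /\ (forall x, 0 < p ord0 x).

Definition H0 (v : 'rV[R]_d) : Prop := \sum_x v ord0 x = 0.

Definition ebasis (x : 'I_d) : 'rV[R]_d := delta_mx ord0 x.

Definition partial (f : 'rV[R]_d -> R) (x : 'I_d) (p : 'rV[R]_d) : R :=
  'D_(ebasis x) f p.

Definition C1 (f : 'rV[R]_d -> R) : Prop :=
  (forall p, differentiable f p) /\ (forall x, continuous (partial f x)).

Variable K : 'I_d -> 'rV[R]_d -> R.

Definition H (x : 'I_d) (p : 'rV[R]_d) : R :=
  K x p + \sum_z partial (K z) x p * p ord0 z.

Definition Psi (x y : 'I_d) (p : 'rV[R]_d) : R := H y p - H x p.

Variable alpha : 'M[R]_d.

Definition Gamma (p : 'rV[R]_d) : 'M[R]_d :=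
  \matrix_(x, y)
    if x == y then - \sum_(y' | y' != x) expR (- Num.max (Psi x y' p) 0) * alpha x y'
    else expR (- Num.max (Psi x y p) 0) * alpha x y.

Definition Ffun (p : 'rV[R]_d) : R :=
  \sum_x (K x p + ln (p ord0 x)) * p ord0 x.

(* alpha irreducible: the graph with edges {x,y} where alpha x y = 1 is connected *)
Definition alpha_irreducible : Prop :=
  forall x y : 'I_d, connect (fun a b => alpha a b == 1) x y.

End Defs.

(** Write [q x = p_x e^(H^x(p))].  Because [e^(-(b-a)^+) = e^a e^(-max(a,b))],
    the [y]-th entry of [p Γ(p)] is the flux [Σ_x c(x,y) (q x - q y)] through
    the symmetric conductances [c(x,y) = e^(-max(H^x,H^y)) α(x,y)].  By the
    maximum principle on the connected graph of [α], [p Γ(p) = 0] iff [q] is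
    constant; constancy of [q] forces [p > 0] on the simplex.  On the other
    side, for [p > 0] the gradient of [F] has coordinates
    [H^x(p) + log p_x + 1 = log q x + 1], and a linear form vanishes on [H_0]
    iff its coefficients are constant. *)
From HB Require Import structures.
From mathcomp Require Import all_boot all_order all_algebra.
From mathcomp Require Import all_classical all_reals all_analysis.
From mathcomp Require Import ring lra.
Set Implicit Arguments. Unset Strict Implicit. Unset Printing Implicit Defensive.
Import Order.TTheory GRing.Theory Num.Theory.
Import numFieldNormedType.Exports.
Local Open Scope ring_scope.

Section Derivatives.
Variables (R : realType) (d : nat).
Implicit Types (p v : 'rV[R]_d) (f : 'rV[R]_d -> R).

Lemma is_derive_partial f p v : differentiable f p ->
  is_derive p v f (\sum_x v ord0 x * partial f x p).
Proof.
move=> df; apply: DeriveDef; first exact: diff_derivable.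
rewrite deriveE // [in LHS](matrix_sum_delta v) big_ord1 linear_sum.
by apply: eq_bigr => x _; rewrite linearZ /= /partial deriveE.
Qed.

Definition row_coord (i : 'I_d) (q : 'rV[R]_d) : R := q ord0 i.

Fact row_coord_is_linear i : linear (row_coord i).
Proof. by move=> a u w; rewrite /row_coord !mxE. Qed.

HB.instance Definition _ i :=
  GRing.isLinear.Build R 'rV[R]_d R *:%R (row_coord i) (row_coord_is_linear i).

Lemma is_derive_coord p v i :
  is_derive p v (fun q : 'rV[R]_d => q ord0 i) (v ord0 i).
Proof.
have coord_cont : continuous (row_coord i) by exact: coord_continuous.
change (is_derive p v (row_coord i) (row_coord i v)).
apply: DeriveDef; first exact/diff_derivable/linear_differentiable.
by rewrite deriveE ?diff_lin //; exact: linear_differentiable.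
Qed.

Lemma is_derive_ln_coord p v i : 0 < p ord0 i ->
  is_derive p v (fun q : 'rV[R]_d => ln (q ord0 i)) (v ord0 i / p ord0 i).
Proof.
move=> pi_gt0.
have dln : differentiable (@ln R) (p ord0 i).
  by apply/derivable1_diffP; have [] := is_derive1_ln pi_gt0.
have dcoord : differentiable (fun q : 'rV[R]_d => q ord0 i) p.
  exact: differentiable_coord.
have dcoordE : 'd (fun q : 'rV[R]_d => q ord0 i) p v = v ord0 i.
  by rewrite -deriveE //; have [_ ->] := is_derive_coord p v i.
change (is_derive p v (@ln R \o (fun q : 'rV[R]_d => q ord0 i))
                      (v ord0 i / p ord0 i)).
apply: DeriveDef; first exact/diff_derivable/differentiable_comp.
rewrite deriveE; last exact: differentiable_comp.
rewrite diff_comp //= dcoordE.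
have -> : v ord0 i = v ord0 i *: (1 : R) by rewrite /GRing.scale /= mulr1.
rewrite linearZ /= -deriveE //; have [_ ->] := is_derive1_ln pi_gt0.
by rewrite -mulr_algl.
Qed.

Lemma is_derive_Ffun (K : 'I_d -> 'rV[R]_d -> R) p v :
  (forall x, differentiable (K x) p) -> (forall x, 0 < p ord0 x) ->
  is_derive p v (Ffun K) (\sum_x v ord0 x * (H K x p + ln (p ord0 x) + 1)).
Proof.
move=> dK p_gt0.
have -> : Ffun K = \sum_i ((fun q : 'rV[R]_d => K i q + ln (q ord0 i)) *
                           (fun q => q ord0 i)).
  by apply/funext => q; rewrite /Ffun fct_sumE.
apply: is_derive_eq.
  apply: is_derive_sum => i; apply: is_deriveM; last exact: is_derive_coord.
  by apply: is_deriveD; [exact: is_derive_partial | exact: is_derive_ln_coord].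
transitivity (\sum_i ((K i p + ln (p ord0 i)) * v ord0 i + v ord0 i) +
   \sum_i \sum_x p ord0 i * (v ord0 x * partial (K i) x p)).
  rewrite -big_split /=; apply: eq_bigr => i _.
  rewrite /GRing.scale /= mulrDr mulr_sumr mulrCA divff ?gt_eqF // mulr1.
  ring.
rewrite exchange_big -big_split /=; apply: eq_bigr => x _.
have -> : \sum_i p ord0 i * (v ord0 x * partial (K i) x p) =
          v ord0 x * \sum_z partial (K z) x p * p ord0 z.
  by rewrite mulr_sumr; apply: eq_bigr => z _; ring.
rewrite /H; ring.
Qed.

End Derivatives.

Section LinearFormsOnH0.
Variables (R : realType) (d : nat).

Lemma sum_ebasis_mul (a : 'I_d) (g : 'I_d -> R) :
  \sum_x @ebasis R d a ord0 x * g x = g a.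
Proof.
rewrite (bigD1 a) //= big1 ?addr0; first by rewrite mxE !eqxx mul1r.
by move=> x xa; rewrite mxE (negbTE xa) andbF mul0r.
Qed.

Lemma H0_ebasisB (a b : 'I_d) : H0 (@ebasis R d a - @ebasis R d b).
Proof.
have sum_ebasis c : \sum_x @ebasis R d c ord0 x = 1.
  by rewrite -(sum_ebasis_mul c (fun=> 1)); apply: eq_bigr => x _; rewrite mulr1.
rewrite /H0; under eq_bigr do rewrite mxE [X in _ + X]mxE.
by rewrite sumrB !sum_ebasis subrr.
Qed.

Lemma H0_orthogonal_iff_const (g : 'I_d -> R) :
  (forall v, H0 v -> \sum_x v ord0 x * g x = 0) <-> (forall x y, g x = g y).
Proof.
split=> [orth a b | gconst v Hv].
  have := orth _ (H0_ebasisB a b).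
  under eq_bigr do rewrite mxE [X in _ + X]mxE mulrBl.
  by rewrite sumrB !sum_ebasis_mul => /eqP; rewrite subr_eq0 => /eqP.
move: v Hv g gconst; case: d => [|n] v Hv g gconst; first by rewrite big_ord0.
by under eq_bigr do rewrite (gconst _ ord0); rewrite -mulr_suml Hv mul0r.
Qed.

End LinearFormsOnH0.

Lemma connect_harmonic_const (R : realType) (d : nat) (q : 'I_d -> R)
    (w : 'I_d -> 'I_d -> R) (e : rel 'I_d) :
  (forall x y, 0 <= w x y) -> (forall x y, e x y -> 0 < w x y) ->
  symmetric e -> (forall y, \sum_x w x y * (q x - q y) = 0) ->
  (forall x y, connect e x y) -> forall x y, q x = q y.
Proof.
move=> w_ge0 w_gt0 e_sym harmonic conn x y.
have [m _ qm_max] := @arg_maxP _ _ _ x xpredT q isT.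
have max_step a b : e a b -> q a = q m -> q b = q m.
  move=> eab qa; move/eqP: (harmonic a).
  rewrite -oppr_eq0 -sumrN psumr_eq0 => [|i _]; last first.
    by rewrite oppr_ge0 mulr_ge0_le0 // subr_le0 qa; apply: qm_max.
  have eba : e b a by rewrite e_sym.
  move=> /allP /(_ b (mem_index_enum b)) /=; rewrite oppr_eq0 mulf_eq0.
  by rewrite gt_eqF ?w_gt0 //= subr_eq0 qa => /eqP.
have max_closed : closed_mem e (mem [pred i | q i == q m]).
  move=> a b eab; rewrite !inE; apply/idP/idP => /eqP qm; apply/eqP.
    exact: max_step eab qm.
  by apply: max_step qm; rewrite e_sym.
move: (closed_connect max_closed (conn m x)) (closed_connect max_closed (conn m y)).
by rewrite !inE eqxx => /esym/eqP -> /esym/eqP ->.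
Qed.

Lemma expR_neg_max_subr0 (R : realType) (a b : R) :
  expR (- Num.max (b - a) 0) = expR a * expR (- Num.max a b).
Proof.
rewrite -expRD; congr expR.
by case: (leP (b - a) 0) => ?; case: (leP a b) => ?; lra.
Qed.

Section FixedPoints.
Variables (R : realType) (d : nat) (K : 'I_d -> 'rV[R]_d -> R) (alpha : 'M[R]_d).
Hypothesis alpha_sym : forall x y, alpha x y = alpha y x.

Definition tilted_mass (p : 'rV[R]_d) (x : 'I_d) : R := p ord0 x * expR (H K x p).

Lemma mulmx_Gamma_flux (p : 'rV[R]_d) y :
  (p *m Gamma K alpha p) ord0 y =
  \sum_x (expR (- Num.max (H K x p) (H K y p)) * alpha x y) *
         (tilted_mass p x - tilted_mass p y).
Proof.
rewrite mxE /tilted_mass; set G := Gamma K alpha p.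
have G_diag : G y y = - \sum_(x | x != y)
    expR (H K y p) * expR (- Num.max (H K y p) (H K x p)) * alpha y x.
  by rewrite /G /Gamma mxE eqxx; under eq_bigr do rewrite expR_neg_max_subr0.
have G_offdiag x : x != y ->
    G x y = expR (H K x p) * expR (- Num.max (H K x p) (H K y p)) * alpha x y.
  by move=> xy; rewrite /G /Gamma mxE (negbTE xy) expR_neg_max_subr0.
(* Unification would otherwise unfold [expR] and [H]. *)
clearbody G; move: (H K) (@expR R) => h E in G_diag G_offdiag *.
rewrite (bigD1 y) //= [in RHS](bigD1 y) //= subrr mulr0 add0r.
rewrite G_diag mulrN mulr_sumr -sumrN -big_split /=.
apply: eq_bigr => x xy; rewrite G_offdiag // (alpha_sym y x) (maxC (h y p)).
ring.
Qed.

Lemma fixed_point_iff_tilted_mass_const (p : 'rV[R]_d) :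
  (forall x y, alpha x y = 0 \/ alpha x y = 1) -> alpha_irreducible alpha ->
  p *m Gamma K alpha p = 0 <->
  (forall x y, tilted_mass p x = tilted_mass p y).
Proof.
move=> alpha01 alpha_irr; split=> [pG0 | qconst].
  apply: (@connect_harmonic_const R d _
    (fun x y => expR (- Num.max (H K x p) (H K y p)) * alpha x y) _ _ _ _ _ alpha_irr).
  - by move=> x y; rewrite mulr_ge0 ?expR_ge0 //; case: (alpha01 x y) => ->.
  - by move=> x y /eqP ->; rewrite mulr1 expR_gt0.
  - by move=> x y; rewrite alpha_sym.
  - by move=> y; rewrite -mulmx_Gamma_flux pG0 mxE.
apply/rowP => y; rewrite mulmx_Gamma_flux mxE big1 // => x _.
by rewrite (qconst x y) subrr mulr0.
Qed.

Lemma tilted_mass_const_gt0 (p : 'rV[R]_d) : simplex p ->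
  (forall x y, tilted_mass p x = tilted_mass p y) -> forall x, 0 < p ord0 x.
Proof.
move=> [p_ge0 p_sum1] qconst x; rewrite lt_neqAle p_ge0 andbT eq_sym.
apply/eqP => px0; move/eqP: p_sum1; apply/negP; rewrite big1 1?eq_sym ?oner_eq0 //.
move=> y _; have : tilted_mass p y = 0 by rewrite -(qconst x) /tilted_mass px0 mul0r.
by move/eqP; rewrite mulf_eq0 (gt_eqF (expR_gt0 _)) orbF => /eqP.
Qed.

Lemma tilted_massE (p : 'rV[R]_d) x : 0 < p ord0 x ->
  tilted_mass p x = expR (H K x p + ln (p ord0 x)).
Proof. by move=> px_gt0; rewrite expRD lnK ?posrE // mulrC. Qed.

Lemma Ffun_stationary_iff (p : 'rV[R]_d) :
  (forall x, differentiable (K x) p) -> (forall x, 0 < p ord0 x) ->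
  (forall v, H0 v -> is_derive p v (Ffun K) 0) <->
  (forall x y, tilted_mass p x = tilted_mass p y).
Proof.
move=> dK p_gt0.
have dF v := is_derive_Ffun v dK p_gt0.
have -> : (forall x y, tilted_mass p x = tilted_mass p y) <->
          (forall x y, H K x p + ln (p ord0 x) + 1 = H K y p + ln (p ord0 y) + 1).
  split=> c x y; last by rewrite !tilted_massE ?p_gt0 // (addIr _ (c x y)).
  by congr (_ + 1); apply: expR_inj; rewrite -!tilted_massE ?p_gt0.
rewrite -H0_orthogonal_iff_const; split=> stat v Hv.
  by have [_ <-] := dF v; have [_ ->] := stat v Hv.
by rewrite -(stat v Hv); exact: dF.
Qed.

End FixedPoints.

Theorem theorem4p1 (R : realType) (d : nat) (K : 'I_d -> 'rV[R]_d -> R)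
  (alpha : 'M[R]_d)
  (HK : forall x, C1 (K x))
  (Halpha01 : forall x y, alpha x y = 0 \/ alpha x y = 1)
  (Halpha_sym : forall x y, alpha x y = alpha y x)
  (Halpha_diag : forall x, alpha x x = 0)
  (Halpha_irr : alpha_irreducible alpha)
  (p : 'rV[R]_d) (Hp : simplex p) :
  p *m Gamma K alpha p = 0 <->
  (simplex_int p /\ forall v, H0 v -> is_derive p v (Ffun K) 0).
Proof.
have dK x : differentiable (K x) p by exact: (HK x).1.
have fixE := fixed_point_iff_tilted_mass_const K Halpha_sym p Halpha01 Halpha_irr.
split=> [/fixE qconst | [[_ p_gt0] /(Ffun_stationary_iff dK p_gt0) qconst]].
  have p_gt0 := tilted_mass_const_gt0 Hp qconst.
  by split; [split | apply/(Ffun_stationary_iff dK p_gt0)].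
exact/fixE.
Qed.
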